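(* Let $\mathcal{H}_X,\mathcal{H}_Z,\mathcal{H}_A$ be finite-dimensional Hilbert spaces and let $\mathcal{S}_4:\mathrm{CPTP}(\mathcal{H}_X,\mathcal{H}_Z\otimes\mathcal{H}_A)\to\mathrm{CPTP}(\mathcal{H}_X,\mathcal{H}_Z)$ be the supermap $\mathcal{S}_4(\mathcal{N})=\mathrm{Tr}_A\circ\mathcal{N}$. Let $\{\Pi_k\}$ be a projective measurement on $\mathcal{H}_X$ (orthogonal projectors with $\Pi_k\Pi_l=\delta_{kl}\Pi_k$ and $\sum_k\Pi_k=\mathbb{1}_X$), let $\gamma_k$ be full-rank density operators on $\mathcal{H}_Z\otimes\mathcal{H}_A$, and let $\Gamma(\rho)=\sum_k\mathrm{Tr}[\Pi_k\rho]\,\gamma_k$. For each $k$ let $\mathcal{P}_k$ be the Petz map of $\mathrm{Tr}_A$ with reference state $\gamma_k$: $$\mathcal{P}_k(\sigma)=\gamma_k^{1/2}\Big((\mathrm{Tr}_A\gamma_k)^{-1/2}\,\sigma\,(\mathrm{Tr}_A\gamma_k)^{-1/2}\otimes\mathbb{1}_A\Big)\gamma_k^{1/2}.$$ Define, for $\mathcal{M}\in\mathrm{CPTP}(\mathcal{H}_X,\mathcal{H}_Z)$, the map $\mathcal{R}(\mathcal{M})(\rho):=\sum_k\mathcal{P}_k\big(\mathcal{M}(\Pi_k\rho\Pi_k)\big)$. Then $\mathcal{R}$ is a superchannel from $\mathrm{CPTP}(\mathcal{H}_X,\mathcal{H}_Z)$ to $\mathrm{CPTP}(\mathcal{H}_X,\mathcal{H}_Z\otimes\mathcal{H}_A)$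 and $\mathcal{R}(\mathcal{S}_4(\Gamma))=\Gamma$.
   Context: $\mathrm{CPTP}(\mathcal{H},\mathcal{K})$ denotes the set of quantum channels from operators on $\mathcal{H}$ to operators on $\mathcal{K}$. A superchannel is a linear map on linear maps sending channels to channels that can be realized as $\mathcal{N}\mapsto\mathcal{E}_{\rm post}\circ(\mathcal{N}\otimes\mathcal{I}_M)\circ\mathcal{E}_{\rm pre}$ for some ancilla system $M$ and quantum channels $\mathcal{E}_{\rm pre},\mathcal{E}_{\rm post}$ (i.e. it is deterministically implementable given one black-box use of the input channel). *)

From HB Require Import structures.
From mathcomp Require Import all_boot all_order all_algebra.
From mathcomp Require Import complex mxtens.
From mathcomp Require Import Rstruct.
From Stdlib Require Import ClassicalEpsilon.

Set Implicit Arguments.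
Unset Strict Implicit.
Unset Printing Implicit Defensive.

Import Order.TTheory GRing.Theory Num.Theory.
Local Open Scope ring_scope.

Notation C := (Rdefinitions.R)[i].

Definition adjmx {m n : nat} (A : 'M[C]_(m, n)) : 'M[C]_(n, m) :=
  (map_mx Num.conj A)^T.

Definition herm_op {n : nat} (A : 'M[C]_n) : Prop := adjmx A = A.

Definition psd {n : nat} (A : 'M[C]_n) : Prop :=
  herm_op A /\ forall v : 'cV[C]_n, 0 <= (adjmx v *m A *m v) 0 0.

Definition density {n : nat} (A : 'M[C]_n) : Prop := psd A /\ \tr A = 1.

Definition linmap {m n : nat} (f : 'M[C]_m -> 'M[C]_n) : Prop :=
  forall (a : C) (X Y : 'M[C]_m), f (a *: X + Y) = a *: f X + f Y.

(* Tensor convention: H_1 (x) H_2 is indexed by 'I_(n1 * n2) through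
   mxtens_index (i1, i2) (first factor major), matching mxtens' tensmx. *)

Definition blk {m k : nat} (X : 'M[C]_(m * k)) (a b : 'I_k) : 'M[C]_m :=
  \matrix_(i, j) X (mxtens_index (i, a)) (mxtens_index (j, b)).

Definition tens_id {m n : nat} (f : 'M[C]_m -> 'M[C]_n) (k : nat)
  (X : 'M[C]_(m * k)) : 'M[C]_(n * k) :=
  \sum_(a < k) \sum_(b < k) (f (blk X a b) *t (delta_mx a b : 'M[C]_k)).
Arguments tens_id {m n} f k X.

Definition completely_positive {m n : nat} (f : 'M[C]_m -> 'M[C]_n) : Prop :=
  forall (k : nat) (X : 'M[C]_(m * k)), psd X -> psd (tens_id f k X).

Definition trace_preserving {m n : nat} (f : 'M[C]_m -> 'M[C]_n) : Prop :=
  forall X : 'M[C]_m, \tr (f X) = \tr X.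

Definition CPTP {m n : nat} (f : 'M[C]_m -> 'M[C]_n) : Prop :=
  [/\ linmap f, completely_positive f & trace_preserving f].

Definition ptrace2 {m n : nat} (X : 'M[C]_(m * n)) : 'M[C]_m :=
  \matrix_(i, j) \sum_(a < n) X (mxtens_index (i, a)) (mxtens_index (j, a)).

Definition superchannel {a b c d : nat}
  (S : ('M[C]_a -> 'M[C]_b) -> ('M[C]_c -> 'M[C]_d)) : Prop :=
  [/\ (forall (al : C) (N1 N2 : 'M[C]_a -> 'M[C]_b), linmap N1 -> linmap N2 ->
         forall X, S (fun Y => al *: N1 Y + N2 Y) X = al *: S N1 X + S N2 X),
      (forall N, CPTP N -> CPTP (S N)) &
      exists (m : nat) (Epre : 'M[C]_c -> 'M[C]_(a * m))
             (Epost : 'M[C]_(b * m) -> 'M[C]_d),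
        [/\ CPTP Epre, CPTP Epost &
            forall N, linmap N -> forall X, S N X = Epost (tens_id N m (Epre X))]].

(* the positive semidefinite square root (the unique psd S with S S = A when
   A is psd; 0 otherwise) *)
Definition sqrtm {n : nat} (A : 'M[C]_n) : 'M[C]_n :=
  match excluded_middle_informative (exists S : 'M[C]_n, psd S /\ S *m S = A) with
  | left H => proj1_sig (constructive_indefinite_description _ H)
  | right _ => 0
  end.

Definition petz {z a : nat} (g : 'M[C]_(z * a)) (s : 'M[C]_z) : 'M[C]_(z * a) :=
  let h := invmx (sqrtm (ptrace2 g)) in
  sqrtm g *m ((h *m s *m h) *t (1%:M : 'M[C]_a)) *m sqrtm g.

Definition S4 {x z a : nat} (N : 'M[C]_x -> 'M[C]_(z * a)) : 'M[C]_x -> 'M[C]_z :=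
  fun rho => ptrace2 (N rho).

Definition Gam {x za K : nat} (Pi : 'I_K -> 'M[C]_x) (gam : 'I_K -> 'M[C]_za)
  (rho : 'M[C]_x) : 'M[C]_za :=
  \sum_(k < K) \tr (Pi k *m rho) *: gam k.

Definition Rmap {x z a K : nat} (Pi : 'I_K -> 'M[C]_x) (gam : 'I_K -> 'M[C]_(z * a))
  (M : 'M[C]_x -> 'M[C]_z) (rho : 'M[C]_x) : 'M[C]_(z * a) :=
  \sum_(k < K) petz (gam k) (M (Pi k *m rho *m Pi k)).

(* The superchannel uses the outcome register C^K as its ancilla: the
   pre-processing rho |-> sum_k Pi_k rho Pi_k (x) |k><k| performs the Lueders
   measurement and records its outcome, and the post-processing
   Y |-> sum_k P_k (Y_kk) applies to the k-th diagonal block the Petz map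
   selected by the record.  All maps involved are sums of Kraus conjugations,
   hence completely positive.  The Petz map is trace preserving because
   Tr (gamma^1/2 (W (x) 1) gamma^1/2) = Tr ((Tr_A gamma) W), and Tr_A gamma is
   invertible because gamma has full rank.  Finally, orthogonality of the
   projectors gives Gamma (Pi_k rho Pi_k) = Tr [Pi_k rho] gamma_k, and
   P_k (Tr_A gamma_k) = gamma_k. *)

From HB Require Import structures.
From mathcomp Require Import all_boot all_order all_algebra.
From mathcomp Require Import complex mxtens.
From mathcomp Require Import Rstruct.
From mathcomp Require Import sesquilinear spectral.
From Stdlib Require Import ClassicalEpsilon.

Set Implicit Arguments.
Unset Strict Implicit.
Unset Printing Implicit Defensive.

Import Order.TTheory GRing.Theory Num.Theory.
Local Open Scope ring_scope.

Lemma adjmxE m n (A : 'M[C]_(m, n)) i j : adjmx A i j = (A j i)^*.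
Proof. by rewrite /adjmx !mxE. Qed.

Lemma adjmxK m n (A : 'M[C]_(m, n)) : adjmx (adjmx A) = A.
Proof. by apply/matrixP=> i j; rewrite !adjmxE conjCK. Qed.

Lemma adjmxM m n p (A : 'M[C]_(m, n)) (B : 'M[C]_(n, p)) :
  adjmx (A *m B) = adjmx B *m adjmx A.
Proof.
apply/matrixP=> i j; rewrite adjmxE !mxE rmorph_sum; apply: eq_bigr => k _.
by rewrite !adjmxE rmorphM mulrC.
Qed.

Lemma adjmxD m n (A B : 'M[C]_(m, n)) : adjmx (A + B) = adjmx A + adjmx B.
Proof. by apply/matrixP=> i j; rewrite !mxE rmorphD. Qed.

Lemma adjmx0 m n : adjmx (0 : 'M[C]_(m, n)) = 0.
Proof. by apply/matrixP=> i j; rewrite !mxE rmorph0. Qed.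

Lemma adjmx1 n : adjmx (1%:M : 'M[C]_n) = 1%:M.
Proof. by apply/matrixP=> i j; rewrite !mxE rmorph_nat eq_sym. Qed.

Lemma adjmx_delta m n (i : 'I_m) (j : 'I_n) :
  adjmx (delta_mx i j : 'M[C]_(m, n)) = delta_mx j i.
Proof.
apply/matrixP=> p q; rewrite !mxE andbC.
by case: (_ && _); rewrite ?rmorph1 ?rmorph0.
Qed.

Lemma adjmxT m n p q (A : 'M[C]_(m, n)) (B : 'M[C]_(p, q)) :
  adjmx (A *t B) = adjmx A *t adjmx B.
Proof. by apply/matrixP=> i j; rewrite !mxE rmorphM. Qed.

Lemma adjmx_inv n (A : 'M[C]_n) : adjmx (invmx A) = invmx (adjmx A).
Proof. by rewrite /adjmx -trmx_inv (map_invmx (@Num.conj C)). Qed.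

Section TensorProduct.

Variable R : pzRingType.

Lemma tensmxDl m n p q (A B : 'M[R]_(m, n)) (D : 'M[R]_(p, q)) :
  (A + B) *t D = A *t D + B *t D.
Proof. by apply/matrixP=> i j; rewrite !mxE mulrDl. Qed.

Lemma tensmxDr m n p q (A : 'M[R]_(m, n)) (B D : 'M[R]_(p, q)) :
  A *t (B + D) = A *t B + A *t D.
Proof. by apply/matrixP=> i j; rewrite !mxE mulrDr. Qed.

Lemma tensmxZl m n p q a (A : 'M[R]_(m, n)) (D : 'M[R]_(p, q)) :
  (a *: A) *t D = a *: (A *t D).
Proof. by apply/matrixP=> i j; rewrite !mxE mulrA. Qed.

Lemma tensmx_suml m n p q I (r : seq I) (P : pred I) (F : I -> 'M[R]_(m, n))
    (D : 'M[R]_(p, q)) :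
  (\sum_(i <- r | P i) F i) *t D = \sum_(i <- r | P i) (F i *t D).
Proof.
exact: (big_morph (fun M : 'M[R]_(m, n) => M *t D) (fun A B => tensmxDl A B D)
                  (@tens0mx R m n p q D)).
Qed.

Lemma tensmx_sumr m n p q I (r : seq I) (P : pred I) (A : 'M[R]_(m, n))
    (F : I -> 'M[R]_(p, q)) :
  A *t (\sum_(i <- r | P i) F i) = \sum_(i <- r | P i) (A *t F i).
Proof.
exact: (big_morph (fun M : 'M[R]_(p, q) => A *t M) (@tensmxDr _ _ _ _ A)
                  (@tensmx0 R m n p q A)).
Qed.

Lemma tensmx11 m n : (1%:M : 'M[R]_m) *t (1%:M : 'M[R]_n) = 1%:M.
Proof.
apply/matrixP=> i j.
case: (mxtens_indexP i)=> i1 i2; case: (mxtens_indexP j)=> j1 j2.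
rewrite tensmxE !mxE (inj_eq (can_inj (@mxtens_indexK _ _))) xpair_eqE.
by case: (i1 == j1); case: (i2 == j2); rewrite ?mulr1 ?mulr0.
Qed.

Lemma big_mxtens_index m n (F : 'I_(m * n) -> R) :
  \sum_(i < m * n) F i = \sum_(i < m) \sum_(j < n) F (mxtens_index (i, j)).
Proof.
rewrite pair_big /= (reindex (@mxtens_index m n)) /=.
  by apply: eq_bigr => -[i j] _.
by exists (@mxtens_unindex m n) => k _; rewrite (mxtens_indexK, mxtens_unindexK).
Qed.

Lemma mxtrace_tensmx m n (A : 'M[R]_m) (B : 'M[R]_n) :
  \tr (A *t B) = \tr A * \tr B.
Proof.
rewrite /mxtrace big_mxtens_index mulr_suml; apply: eq_bigr => i _.
by rewrite mulr_sumr; apply: eq_bigr => j _; rewrite tensmxE.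
Qed.

Lemma mxtrace_sum n I (r : seq I) (P : pred I) (F : I -> 'M[R]_n) :
  \tr (\sum_(i <- r | P i) F i) = \sum_(i <- r | P i) \tr (F i).
Proof. exact: raddf_sum. Qed.

Lemma mxtrace_delta k (b : 'I_k) : \tr (delta_mx b b : 'M[R]_k) = 1.
Proof.
rewrite /mxtrace (bigD1 b) //= mxE !eqxx big1 ?addr0 // => i /negbTE ib.
by rewrite mxE ib.
Qed.

Lemma tensor_dim_gt0 z a (g : 'M[R]_(z * a)) : \tr g != 0 -> (0 < a)%N.
Proof.
case: a g => // g; rewrite /mxtrace big_mxtens_index big1 ?eqxx // => i _.
by rewrite big_ord0.
Qed.

Lemma sum_delta_l (I : finType) (x : I) (F : I -> R) :
  \sum_(i : I) (i == x)%:R * F i = F x.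
Proof.
rewrite (bigD1 x) //= eqxx mul1r big1 ?addr0 // => i /negbTE ->; exact: mul0r.
Qed.

Lemma sum_delta_r (I : finType) (x : I) (F : I -> R) :
  \sum_(i : I) F i * (i == x)%:R = F x.
Proof.
rewrite (bigD1 x) //= eqxx mulr1 big1 ?addr0 // => i /negbTE ->; exact: mulr0.
Qed.

End TensorProduct.

Lemma unitmx_ker0 (R : fieldType) n (A : 'M[R]_n) :
  (forall v : 'cV_n, A *m v = 0 -> v = 0) -> A \in unitmx.
Proof.
move=> ker0; rewrite -unitmx_tr -row_free_unit -kermx_eq0.
apply/eqP/row_matrixP => i; rewrite row0.
apply: trmx_inj; rewrite trmx0; apply: ker0.
by rewrite -[A in A *m _]trmxK -trmx_mul -row_mul mulmx_ker row0 trmx0.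
Qed.

Lemma blkD m k (X Y : 'M[C]_(m * k)) a b : blk (X + Y) a b = blk X a b + blk Y a b.
Proof. by apply/matrixP=> i j; rewrite !mxE. Qed.

Lemma blkZ m k c (X : 'M[C]_(m * k)) a b : blk (c *: X) a b = c *: blk X a b.
Proof. by apply/matrixP=> i j; rewrite !mxE. Qed.

Lemma blk0 m k a b : blk (0 : 'M[C]_(m * k)) a b = 0.
Proof. by apply/matrixP=> i j; rewrite !mxE. Qed.

Lemma blk_sum m k I (r : seq I) (P : pred I) (F : I -> 'M[C]_(m * k)) a b :
  blk (\sum_(i <- r | P i) F i) a b = \sum_(i <- r | P i) blk (F i) a b.
Proof.
exact: (big_morph (fun X : 'M[C]_(m * k) => blk X a b) (fun X Y => blkD X Y a b)
                  (@blk0 m k a b)).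
Qed.

Lemma blk_tensmx m k (A : 'M[C]_m) (B : 'M[C]_k) a b : blk (A *t B) a b = B a b *: A.
Proof. by apply/matrixP=> i j; rewrite [LHS]mxE tensmxE mxE mulrC. Qed.

Lemma blk_tensmx_delta m k (A : 'M[C]_m) (a b c d : 'I_k) :
  blk (A *t delta_mx a b) c d = if (a == c) && (b == d) then A else 0.
Proof.
rewrite blk_tensmx mxE ![_ == a]eq_sym ![_ == b]eq_sym.
by case: ifP; rewrite ?scale1r ?scale0r.
Qed.

Lemma blk1 n k (b : 'I_k) : blk (1%:M : 'M[C]_(n * k)) b b = 1%:M.
Proof.
apply/matrixP => i j.
by rewrite !mxE (inj_eq (can_inj (@mxtens_indexK _ _))) xpair_eqE eqxx andbT.
Qed.

Lemma mx_blk_expansion m k (X : 'M[C]_(m * k)) :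
  X = \sum_(a < k) \sum_(b < k) (blk X a b *t (delta_mx a b : 'M[C]_k)).
Proof.
apply/matrixP=> i j.
case: (mxtens_indexP i)=> i1 i2; case: (mxtens_indexP j)=> j1 j2.
rewrite summxE (bigD1 i2) //= [X in _ + X]big1 ?addr0; last first.
  move=> a /negbTE ai; rewrite summxE big1 // => b _.
  by rewrite tensmxE !mxE eq_sym ai mulr0.
rewrite summxE (bigD1 j2) //= [X in _ + X]big1 ?addr0; last first.
  by move=> b /negbTE bj; rewrite tensmxE !mxE eq_sym bj andbF mulr0.
by rewrite tensmxE !mxE !eqxx mulr1.
Qed.

Lemma sum_mxtrace_blk n k (Y : 'M[C]_(n * k)) : \sum_(b < k) \tr (blk Y b b) = \tr Y.
Proof.
rewrite [RHS]/mxtrace big_mxtens_index exchange_big; apply: eq_bigr => b _.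
by apply: eq_bigr => i _; rewrite mxE.
Qed.

Lemma blk_tens_id m n (f : 'M[C]_m -> 'M[C]_n) k (X : 'M[C]_(m * k)) c d :
  blk (tens_id f k X) c d = f (blk X c d).
Proof.
rewrite /tens_id blk_sum (bigD1 c) //= [X in _ + X]big1 ?addr0; last first.
  move=> a /negbTE ac; rewrite blk_sum big1 // => b _.
  by rewrite blk_tensmx_delta ac.
rewrite blk_sum (bigD1 d) //= [X in _ + X]big1 ?addr0; last first.
  by move=> b /negbTE bd; rewrite blk_tensmx_delta bd andbF.
by rewrite blk_tensmx_delta !eqxx.
Qed.

Lemma eq_tens_id m n (f g : 'M[C]_m -> 'M[C]_n) k X :
  f =1 g -> tens_id f k X = tens_id g k X.
Proof. by move=> fg; apply: eq_bigr => a _; apply: eq_bigr => b _; rewrite fg. Qed.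

Lemma tens_id_comp m n p (f : 'M[C]_n -> 'M[C]_p) (g : 'M[C]_m -> 'M[C]_n) k X :
  tens_id (fun Y => f (g Y)) k X = tens_id f k (tens_id g k X).
Proof. by apply: eq_bigr => a _; apply: eq_bigr => b _; rewrite blk_tens_id. Qed.

Lemma tens_id_sum m n I (r : seq I) (P : pred I) (F : I -> 'M[C]_m -> 'M[C]_n) k X :
  tens_id (fun Y => \sum_(i <- r | P i) F i Y) k X =
  \sum_(i <- r | P i) tens_id (F i) k X.
Proof.
rewrite /tens_id; under eq_bigr => a _ do under eq_bigr => b _ do rewrite tensmx_suml.
by rewrite [RHS]exchange_big; apply: eq_bigr => a _; rewrite exchange_big.
Qed.

Lemma tens_id_conj m n (B : 'M[C]_(n, m)) k X :
  tens_id (fun Y => B *m Y *m adjmx B) k X =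
  (B *t (1%:M : 'M[C]_k)) *m X *m adjmx (B *t (1%:M : 'M[C]_k)).
Proof.
rewrite {2}(mx_blk_expansion X) adjmxT adjmx1 mulmx_sumr mulmx_suml.
apply: eq_bigr => a _; rewrite mulmx_sumr mulmx_suml; apply: eq_bigr => b _.
by rewrite !tensmx_mul mul1mx mulmx1.
Qed.

Lemma psd_conj n m (B : 'M[C]_(n, m)) (Y : 'M[C]_m) :
  psd Y -> psd (B *m Y *m adjmx B).
Proof.
case=> hY pY; split; first by rewrite /herm_op !adjmxM adjmxK hY mulmxA.
by move=> v; have := pY (adjmx B *m v); rewrite adjmxM adjmxK !mulmxA.
Qed.

Lemma psd0 n : psd (0 : 'M[C]_n).
Proof.
split; first by rewrite /herm_op adjmx0.
by move=> v; rewrite mulmx0 mul0mx mxE.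
Qed.

Lemma psdD n (X Y : 'M[C]_n) : psd X -> psd Y -> psd (X + Y).
Proof.
case=> hX pX [hY pY]; split; first by rewrite /herm_op adjmxD hX hY.
by move=> v; rewrite mulmxDr mulmxDl mxE addr_ge0.
Qed.

Lemma psd_sum n I (r : seq I) (P : pred I) (F : I -> 'M[C]_n) :
  (forall i, P i -> psd (F i)) -> psd (\sum_(i <- r | P i) F i).
Proof.
move=> psdF; elim/big_rec: _ => [|i y Pi py]; first exact: psd0.
exact: psdD (psdF i Pi) py.
Qed.

Lemma cp_conj n m (B : 'M[C]_(n, m)) :
  completely_positive (fun X => B *m X *m adjmx B).
Proof. by move=> k X pX; rewrite tens_id_conj; exact: psd_conj. Qed.

Lemma cp_sum m n I (r : seq I) (P : pred I) (F : I -> 'M[C]_m -> 'M[C]_n) :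
  (forall i, completely_positive (F i)) ->
  completely_positive (fun X => \sum_(i <- r | P i) F i X).
Proof. by move=> cpF k X pX; rewrite tens_id_sum; apply: psd_sum => i _; exact: cpF. Qed.

Lemma cp_comp m n p (f : 'M[C]_n -> 'M[C]_p) (g : 'M[C]_m -> 'M[C]_n) :
  completely_positive f -> completely_positive g ->
  completely_positive (fun X => f (g X)).
Proof. by move=> cpf cpg k X pX; rewrite tens_id_comp; apply/cpf/cpg. Qed.

Lemma eq_cp m n (f g : 'M[C]_m -> 'M[C]_n) :
  f =1 g -> completely_positive f -> completely_positive g.
Proof. by move=> fg cpf k X pX; rewrite -(eq_tens_id X fg); exact: cpf. Qed.

Lemma linmap0 m n (f : 'M[C]_m -> 'M[C]_n) : linmap f -> f 0 = 0.
Proof.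
move=> lin; have := lin 1 0 0; rewrite !scale1r !addr0 => f0.
by apply: (@addrI _ (f 0)); rewrite addr0 -f0.
Qed.

Lemma linmapZ m n (f : 'M[C]_m -> 'M[C]_n) c X : linmap f -> f (c *: X) = c *: f X.
Proof. by move=> lin; have := lin c X 0; rewrite (linmap0 lin) !addr0. Qed.

Lemma linmap_mulmx2 m n (B : 'M[C]_(n, m)) (D : 'M[C]_(m, n)) :
  linmap (fun X => B *m X *m D).
Proof. by move=> c X Y; rewrite mulmxDr mulmxDl -scalemxAr -scalemxAl. Qed.

(* The isometry v |-> v (x) e_a. *)
Definition blk_embed n k (a : 'I_k) : 'M[C]_(n * k, n) :=
  \matrix_(i, j) (i == mxtens_index (j, a))%:R.

Lemma blk_embedE n k (a : 'I_k) (i1 : 'I_n) (i2 : 'I_k) p :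
  blk_embed n a (mxtens_index (i1, i2)) p = (i2 == a)%:R * (p == i1)%:R.
Proof.
rewrite mxE (inj_eq (can_inj (@mxtens_indexK _ _))) xpair_eqE eq_sym.
by case: (p == i1); case: (i2 == a); rewrite ?mulr1 ?mulr0.
Qed.

Lemma blk_embed_compress n k (a : 'I_k) (Y : 'M[C]_(n * k)) :
  adjmx (blk_embed n a) *m Y *m blk_embed n a = blk Y a a.
Proof.
apply/matrixP=> p q; rewrite !mxE.
under eq_bigr => j _ do (rewrite !mxE; under eq_bigr => i _ do rewrite !mxE rmorph_nat).
under eq_bigr => j _ do rewrite sum_delta_l.
exact: sum_delta_r.
Qed.

Lemma blk_embed_conj n k (a : 'I_k) (Z : 'M[C]_n) :
  blk_embed n a *m Z *m adjmx (blk_embed n a) = Z *t (delta_mx a a : 'M[C]_k).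
Proof.
apply/matrixP=> i j.
case: (mxtens_indexP i)=> i1 i2; case: (mxtens_indexP j)=> j1 j2.
rewrite tensmxE [in RHS]mxE [LHS]mxE.
under eq_bigr => q _ do rewrite adjmxE blk_embedE rmorphM !rmorph_nat [X in X * _]mxE.
under eq_bigr => q _ do
  (under eq_bigr => p _ do rewrite blk_embedE -mulrA; rewrite -mulr_sumr sum_delta_l).
under eq_bigr => q _ do rewrite mulrCA -mulrA.
rewrite -!mulr_sumr sum_delta_r.
by case: (j2 == a); case: (i2 == a); rewrite ?(mulr0, mul0r, mulr1, mul1r).
Qed.

Lemma blk_embed_isometry n k (a : 'I_k) :
  adjmx (blk_embed n a) *m blk_embed n a = 1%:M.
Proof. by rewrite -[adjmx _]mulmx1 blk_embed_compress blk1. Qed.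

Lemma psd_diag n (s : 'rV[C]_n) : (forall j, 0 <= s 0 j) -> psd (diag_mx s).
Proof.
move=> s_ge0; split.
  apply/matrixP => i j; rewrite adjmxE !mxE eq_sym.
  have [->|_] := eqVneq i j; last by rewrite !mulr0n rmorph0.
  by rewrite !mulr1n conj_Creal // ger0_real.
move=> v; rewrite mul_mx_diag mxE; apply: sumr_ge0 => j _.
by rewrite mxE adjmxE mulrC mulrA mulr_ge0 // mul_conjC_ge0.
Qed.

Lemma psd_spectral n (A : 'M[C]_n) : psd A ->
  exists2 Q : 'M[C]_n, adjmx Q *m Q = 1%:M /\ Q *m adjmx Q = 1%:M &
  exists2 d : 'rV[C]_n, (forall j, 0 <= d 0 j) & A = Q *m diag_mx d *m adjmx Q.
Proof.
move=> [hA pA].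
have Aherm : A \is hermsymmx.
  rewrite qualifE /= expr0 scale1r; apply/eqP.
  by rewrite -[LHS]hA; apply/matrixP => i j; rewrite !mxE.
have /hermitian_normalmx /orthomx_spectralP Aeq := Aherm.
set P := spectralmx A in Aeq; set d := spectral_diag A in Aeq.
have Pu : P \is unitarymx := spectral_unitarymx A.
have invP : invmx P = adjmx P.
  by rewrite invmx_unitary //; apply/matrixP => i j; rewrite !mxE.
have PPa : P *m adjmx P = 1%:M by rewrite -invP mulmxV // unitarymx_unit.
have PaP : adjmx P *m P = 1%:M by rewrite -invP mulVmx // unitarymx_unit.
exists (adjmx P); first by rewrite adjmxK.
exists d => [j|]; last by rewrite adjmxK -invP.
have := pA (adjmx P *m delta_mx j 0); rewrite Aeq invP adjmxM adjmxK !mulmxA.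
rewrite -[_ *m P *m adjmx P]mulmxA PPa mulmx1 -[_ *m P *m adjmx P]mulmxA PPa mulmx1.
by rewrite adjmx_delta -rowE -colE !mxE eqxx mulr1n.
Qed.

Lemma psd_sqrt_exists n (A : 'M[C]_n) : psd A -> exists S, psd S /\ S *m S = A.
Proof.
move=> /psd_spectral [Q [QaQ _] [d d_ge0 ->]].
pose s := \row_j sqrtC (d 0 j).
exists (Q *m diag_mx s *m adjmx Q); split.
  by apply/psd_conj/psd_diag => j; rewrite mxE sqrtC_ge0.
rewrite -!mulmxA [adjmx Q *m _]mulmxA QaQ mul1mx.
rewrite [diag_mx s *m (diag_mx s *m _)]mulmxA mulmx_diag.
by congr (_ *m (diag_mx _ *m _)); apply/rowP => j; rewrite !mxE -expr2 sqrtCK.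
Qed.

Lemma sqrtmP n (A : 'M[C]_n) : psd A -> psd (sqrtm A) /\ sqrtm A *m sqrtm A = A.
Proof.
move=> pA; rewrite /sqrtm; case: excluded_middle_informative => [ex|[]].
  by case: constructive_indefinite_description.
exact: psd_sqrt_exists.
Qed.

Lemma sqrtm_herm n (A : 'M[C]_n) : herm_op (sqrtm A).
Proof.
rewrite /sqrtm; case: excluded_middle_informative => [ex|_].
  by case: constructive_indefinite_description => S [[]].
by rewrite /herm_op adjmx0.
Qed.

Lemma tensmx1_blk_embed z a (W : 'M[C]_z) :
  W *t (1%:M : 'M[C]_a) = \sum_(b < a) blk_embed z b *m W *m adjmx (blk_embed z b).
Proof.
by rewrite mx1_sum_delta tensmx_sumr; apply: eq_bigr => b _; rewrite blk_embed_conj.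
Qed.

Lemma ptrace2_compress z a (G : 'M[C]_(z * a)) :
  ptrace2 G = \sum_(b < a) adjmx (blk_embed z b) *m G *m blk_embed z b.
Proof.
under eq_bigr => b _ do rewrite blk_embed_compress.
by apply/matrixP => i j; rewrite summxE !mxE; apply: eq_bigr => b _; rewrite mxE.
Qed.

Lemma psd_ptrace2 z a (G : 'M[C]_(z * a)) : psd G -> psd (ptrace2 G).
Proof.
move=> pG; rewrite ptrace2_compress; apply: psd_sum => b _.
by have := psd_conj (adjmx (blk_embed z b)) pG; rewrite adjmxK.
Qed.

Lemma linmap_ptrace2 z a : linmap (@ptrace2 z a).
Proof.
move=> c X Y; apply/matrixP => i j; rewrite !mxE.
under eq_bigr => b _ do rewrite !mxE.
by rewrite big_split /= -mulr_sumr.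
Qed.

Lemma mxtrace_mul_tensmx1 z a (G : 'M[C]_(z * a)) (W : 'M[C]_z) :
  \tr (G *m (W *t (1%:M : 'M[C]_a))) = \tr (ptrace2 G *m W).
Proof.
rewrite tensmx1_blk_embed mulmx_sumr mxtrace_sum ptrace2_compress mulmx_suml mxtrace_sum.
by apply: eq_bigr => b _; rewrite mulmxA mxtrace_mulC !mulmxA.
Qed.

Lemma cV_quad_eq0 n (w : 'cV[C]_n) : (adjmx w *m w) 0 0 = 0 -> w = 0.
Proof.
rewrite mxE => sum0; apply/matrixP => i j; rewrite [j]ord1 mxE.
have term_ge0 k : 0 <= adjmx w 0 k * w k 0 by rewrite adjmxE mulrC mul_conjC_ge0.
have /eqP := @psumr_eq0P _ _ xpredT _ (fun k _ => term_ge0 k) sum0 i isT.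
by rewrite adjmxE mulf_eq0 conjC_eq0 orbb => /eqP.
Qed.

Lemma psd_quad_eq0 n (G : 'M[C]_n) (v : 'cV_n) :
  psd G -> (adjmx v *m G *m v) 0 0 = 0 -> G *m v = 0.
Proof.
move=> pG; have [[hS _] SS] := sqrtmP pG.
have -> : adjmx v *m G *m v = adjmx (sqrtm G *m v) *m (sqrtm G *m v).
  by rewrite adjmxM hS !mulmxA -[_ *m sqrtm G *m sqrtm G]mulmxA SS.
by move/cV_quad_eq0 => Sv; rewrite -SS -mulmxA Sv mulmx0.
Qed.

Lemma unitmx_ptrace2 z a (G : 'M[C]_(z * a)) :
  (0 < a)%N -> psd G -> G \in unitmx -> ptrace2 G \in unitmx.
Proof.
move=> a_gt0 pG uG; apply: unitmx_ker0 => v Tv.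
pose J (b : 'I_a) := blk_embed z b *m v.
have quad_ge0 b : 0 <= (adjmx (J b) *m G *m J b) 0 0 by case: pG.
have sum0 : \sum_(b < a) (adjmx (J b) *m G *m J b) 0 0 = 0.
  have : adjmx v *m ptrace2 G *m v = 0 by rewrite -mulmxA Tv mulmx0.
  rewrite ptrace2_compress mulmx_sumr mulmx_suml => /(congr1 (fun M : 'M[C]_1 => M 0 0)).
  rewrite summxE mxE => sum0; rewrite -[RHS]sum0; apply: eq_bigr => b _.
  by rewrite /J adjmxM !mulmxA.
have := @psumr_eq0P _ _ xpredT _ (fun b _ => quad_ge0 b) sum0 (Ordinal a_gt0) isT.
move=> /(psd_quad_eq0 pG) /(congr1 (mulmx (invmx G))); rewrite mulKmx // mulmx0.
rewrite /J => /(congr1 (mulmx (adjmx (blk_embed z (Ordinal a_gt0))))).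
by rewrite mulmxA blk_embed_isometry mul1mx mulmx0.
Qed.

Lemma petz_conj_sum z a (g : 'M[C]_(z * a)) s :
  petz g s =
  \sum_(b < a) (sqrtm g *m blk_embed z b *m invmx (sqrtm (ptrace2 g))) *m s
    *m adjmx (sqrtm g *m blk_embed z b *m invmx (sqrtm (ptrace2 g))).
Proof.
rewrite /petz tensmx1_blk_embed mulmx_sumr mulmx_suml; apply: eq_bigr => b _.
by rewrite !adjmxM adjmx_inv !sqrtm_herm !mulmxA.
Qed.

Lemma cp_petz z a (g : 'M[C]_(z * a)) : completely_positive (petz g).
Proof.
apply: eq_cp (fun s => esym (petz_conj_sum g s)) _.
by apply: cp_sum => b; apply: cp_conj.
Qed.

Lemma linmap_petz z a (g : 'M[C]_(z * a)) : linmap (petz g).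
Proof.
move=> c X Y; rewrite /petz [_ *m (c *: X + Y)]mulmxDr mulmxDl -scalemxAr -scalemxAl.
by rewrite tensmxDl tensmxZl mulmxDr mulmxDl -scalemxAr -scalemxAl.
Qed.

Section PetzRecovery.

Variables (z a : nat) (g : 'M[C]_(z * a)).
Hypotheses (g_density : density g) (g_unit : g \in unitmx).

Let g_psd : psd g. Proof. by case: g_density. Qed.

Let a_gt0 : (0 < a)%N.
Proof.
by case: g_density => _ trg; apply: (tensor_dim_gt0 (g := g)); rewrite trg oner_neq0.
Qed.

Lemma ptrace2_invsqrtm :
  invmx (sqrtm (ptrace2 g)) *m ptrace2 g *m invmx (sqrtm (ptrace2 g)) = 1%:M.
Proof.
have [_ sqrT] := sqrtmP (psd_ptrace2 g_psd).
have uS : sqrtm (ptrace2 g) \in unitmx.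
  have := unitmx_ptrace2 a_gt0 g_psd g_unit.
  by rewrite -[X in X \in unitmx]sqrT unitmx_mul => /andP[].
by rewrite -{2}sqrT !mulmxA mulVmx // mul1mx mulmxV.
Qed.

Lemma petz_tp : trace_preserving (petz g).
Proof.
move=> s; have [_ sqrg] := sqrtmP g_psd.
rewrite /petz mxtrace_mulC mulmxA sqrg mxtrace_mul_tensmx1.
by rewrite !mulmxA mxtrace_mulC !mulmxA ptrace2_invsqrtm mul1mx.
Qed.

Lemma petz_ptrace2 : petz g (ptrace2 g) = g.
Proof.
have [_ sqrg] := sqrtmP g_psd.
by rewrite /petz ptrace2_invsqrtm tensmx11 mulmx1 sqrg.
Qed.

Lemma cptp_petz : CPTP (petz g).
Proof. by split; [exact: linmap_petz | exact: cp_petz | exact: petz_tp]. Qed.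

End PetzRecovery.

Definition luders_record n K (Pi : 'I_K -> 'M[C]_n) (X : 'M[C]_n) : 'M[C]_(n * K) :=
  \sum_(k < K) (Pi k *m X *m Pi k) *t (delta_mx k k : 'M[C]_K).

Definition blkdiag_map m n K (f : 'I_K -> 'M[C]_m -> 'M[C]_n) (Y : 'M[C]_(m * K)) :
  'M[C]_n :=
  \sum_(k < K) f k (blk Y k k).

Lemma blk_luders_record n K (Pi : 'I_K -> 'M[C]_n) X k :
  blk (luders_record Pi X) k k = Pi k *m X *m Pi k.
Proof.
rewrite blk_sum (bigD1 k) //= blk_tensmx_delta eqxx big1 ?addr0 // => l /negbTE lk.
by rewrite blk_tensmx_delta lk.
Qed.

Lemma cptp_blkdiag_map m n K (f : 'I_K -> 'M[C]_m -> 'M[C]_n) :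
  (forall k, CPTP (f k)) -> CPTP (blkdiag_map f).
Proof.
move=> cptp_f; split.
- move=> c X Y; rewrite scaler_sumr -big_split /=; apply: eq_bigr => k _.
  by rewrite blkD blkZ; case: (cptp_f k).
- apply: cp_sum => k; apply: cp_comp; first by case: (cptp_f k).
  apply: eq_cp (cp_conj (adjmx (blk_embed m k))) => Y.
  by rewrite adjmxK blk_embed_compress.
- move=> Y; rewrite mxtrace_sum -sum_mxtrace_blk; apply: eq_bigr => k _.
  by case: (cptp_f k) => _ _ ->.
Qed.

Section LudersMeasurement.

Variables (n K : nat) (Pi : 'I_K -> 'M[C]_n).
Hypotheses (Pi_herm : forall k, herm_op (Pi k))
  (Pi_idem : forall k, Pi k *m Pi k = Pi k) (Pi_sum1 : \sum_(k < K) Pi k = 1%:M).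

Lemma sum_mxtrace_luders X : \sum_(k < K) \tr (Pi k *m X *m Pi k) = \tr X.
Proof.
under eq_bigr => k _ do rewrite mxtrace_mulC mulmxA Pi_idem.
by rewrite -mxtrace_sum -mulmx_suml Pi_sum1 mul1mx.
Qed.

Lemma cp_luders k : completely_positive (fun X => Pi k *m X *m Pi k).
Proof. by apply: eq_cp (cp_conj (Pi k)) => X; rewrite Pi_herm. Qed.

Lemma cptp_luders_record : CPTP (luders_record Pi).
Proof.
split.
- move=> c X Y; rewrite scaler_sumr -big_split /=; apply: eq_bigr => k _.
  by rewrite linmap_mulmx2 tensmxDl tensmxZl.
- apply: cp_sum => k.
  apply: eq_cp (cp_comp (cp_conj (blk_embed n k)) (cp_luders k)) => X.
  exact: blk_embed_conj.
- move=> X; rewrite mxtrace_sum -[RHS]sum_mxtrace_luders; apply: eq_bigr => k _.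
  by rewrite mxtrace_tensmx mxtrace_delta mulr1.
Qed.

End LudersMeasurement.

Section PetzSuperchannel.

Variables (dX dZ dA K : nat).
Variables (Pi : 'I_K -> 'M[C]_dX) (gam : 'I_K -> 'M[C]_(dZ * dA)).

Lemma Rmap_realization (N : 'M[C]_dX -> 'M[C]_dZ) X :
  Rmap Pi gam N X =
  blkdiag_map (fun k => petz (gam k)) (tens_id N K (luders_record Pi X)).
Proof. by apply: eq_bigr => k _; rewrite blk_tens_id blk_luders_record. Qed.

Lemma Rmap_linear (c : C) (N1 N2 : 'M[C]_dX -> 'M[C]_dZ) X :
  Rmap Pi gam (fun Y => c *: N1 Y + N2 Y) X = c *: Rmap Pi gam N1 X + Rmap Pi gam N2 X.
Proof.
rewrite /Rmap scaler_sumr -big_split /=.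
by apply: eq_bigr => k _; rewrite linmap_petz.
Qed.

Hypotheses (gam_density : forall k, density (gam k))
  (gam_unit : forall k, gam k \in unitmx).
Hypotheses (Pi_herm : forall k, herm_op (Pi k))
  (Pi_idem : forall k, Pi k *m Pi k = Pi k) (Pi_sum1 : \sum_(k < K) Pi k = 1%:M).

Lemma cptp_Rmap (N : 'M[C]_dX -> 'M[C]_dZ) : CPTP N -> CPTP (Rmap Pi gam N).
Proof.
move=> [linN cpN tpN]; split.
- move=> c X Y; rewrite /Rmap scaler_sumr -big_split /=; apply: eq_bigr => k _.
  by rewrite linmap_mulmx2 linN linmap_petz.
- apply: cp_sum => k; apply: cp_comp; first exact: cp_petz.
  exact: cp_comp cpN (cp_luders Pi_herm k).
- move=> X; rewrite /Rmap mxtrace_sum -[RHS](sum_mxtrace_luders Pi_idem Pi_sum1).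
  by apply: eq_bigr => k _; rewrite petz_tp ?tpN.
Qed.

Hypothesis Pi_orth : forall k l, Pi k *m Pi l = (if k == l then Pi k else 0).

Lemma Gam_luders k rho :
  Gam Pi gam (Pi k *m rho *m Pi k) = \tr (Pi k *m rho) *: gam k.
Proof.
rewrite /Gam (bigD1 k) //= big1 ?addr0 => [|l /negbTE lk].
  by rewrite !mulmxA Pi_orth eqxx mxtrace_mulC mulmxA Pi_orth eqxx.
by rewrite !mulmxA Pi_orth lk !mul0mx mxtrace0 scale0r.
Qed.

Lemma Rmap_S4_Gam rho : Rmap Pi gam (S4 (Gam Pi gam)) rho = Gam Pi gam rho.
Proof.
apply: eq_bigr => k _.
rewrite /S4 Gam_luders (linmapZ _ _ (@linmap_ptrace2 dZ dA)).
by rewrite (linmapZ _ _ (linmap_petz (gam k))) petz_ptrace2.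
Qed.

End PetzSuperchannel.

Theorem mainTheorem3 (dX dZ dA K : nat)
  (Pi : 'I_K -> 'M[C]_dX) (gam : 'I_K -> 'M[C]_(dZ * dA)) :
  (forall k, herm_op (Pi k)) ->
  (forall k l, Pi k *m Pi l = (if k == l then Pi k else 0)) ->
  \sum_(k < K) Pi k = 1%:M ->
  (forall k, density (gam k)) ->
  (forall k, \rank (gam k) = (dZ * dA)%N) ->
  superchannel (Rmap (z:=dZ) (a:=dA) Pi gam) /\
  (forall rho : 'M[C]_dX, Rmap Pi gam (S4 (Gam Pi gam)) rho = Gam Pi gam rho).
Proof.
move=> Pi_herm Pi_orth Pi_sum1 gam_density gam_rank.
have gam_unit k : gam k \in unitmx by rewrite -row_free_unit /row_free gam_rank.
have Pi_idem k : Pi k *m Pi k = Pi k by rewrite Pi_orth eqxx.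
split; last exact: Rmap_S4_Gam.
split.
- by move=> c N1 N2 _ _ X; apply: Rmap_linear.
- exact: cptp_Rmap.
- exists K, (luders_record Pi), (blkdiag_map (fun k => petz (gam k))); split.
  + exact: cptp_luders_record.
  + by apply: cptp_blkdiag_map => k; apply: cptp_petz.
  + by move=> N _ X; apply: Rmap_realization.
Qed.
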